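(* Let $I\subset\mathbb{R}$ be an interval and let $K,M,N\colon I^2\to I$ be arbitrary means. Then $K$ is the unique $(M,N)$-invariant mean if and only if the sequence of iterates $\big((M,N)^n\big)_{n\in\mathbb{N}}$ converges to $(K,K)$ pointwise on $I^2$.
   Context: A function $K\colon I^2\to\mathbb{R}$ is a mean in $I$ if $\min(x,y)\le K(x,y)\le\max(x,y)$ for all $x,y\in I$; no continuity is assumed. $(M,N)^n$ denotes the $n$-th iterate of the map $(x,y)\mapsto(M(x,y),N(x,y))$. A mean $K$ is $(M,N)$-invariant if $K(M(x,y),N(x,y))=K(x,y)$ for all $x,y\in I$. *)

From Stdlib Require Import Reals.
Open Scope R_scope.

Definition is_interval (I : R -> Prop) : Prop :=
  forall x y z, I x -> I z -> x <= y <= z -> I y.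

(* K is a mean in I (no continuity assumed). Since I is convex, such a K
   automatically maps I^2 into I. *)
Definition is_mean (I : R -> Prop) (K : R -> R -> R) : Prop :=
  forall x y, I x -> I y -> Rmin x y <= K x y <= Rmax x y.

Definition MN_map (M N : R -> R -> R) (p : R * R) : R * R :=
  (M (fst p) (snd p), N (fst p) (snd p)).

Definition MN_iter (M N : R -> R -> R) (n : nat) (p : R * R) : R * R :=
  Nat.iter n (MN_map M N) p.

Definition is_invariant (I : R -> Prop) (M N K : R -> R -> R) : Prop :=
  forall x y, I x -> I y -> K (M x y) (N x y) = K x y.

Definition unique_invariant_mean (I : R -> Prop) (M N K : R -> R -> R) : Prop :=
  is_mean I K /\ is_invariant I M N K /\
  forall K' : R -> R -> R, is_mean I K' -> is_invariant I M N K' ->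
    forall x y, I x -> I y -> K' x y = K x y.

Definition iterates_converge_to (I : R -> Prop) (M N K : R -> R -> R) : Prop :=
  forall x y, I x -> I y ->
    Un_cv (fun n => fst (MN_iter M N n (x, y))) (K x y) /\
    Un_cv (fun n => snd (MN_iter M N n (x, y))) (K x y).

(* Every step of the iteration replaces a pair by two points of the segment it spans, so the
   segments [min, max] along an orbit are nested.  Their endpoints therefore converge, and
   the two limits, as functions of the starting point, are (M,N)-invariant means.  If the
   invariant mean K is unique, both limits equal K and the orbit is squeezed to (K,K).
   Conversely, if every orbit tends to (K,K), then K is invariant because the orbit of
   (M(x,y), N(x,y)) is the shifted orbit of (x,y), and any invariant mean K' is constant
   along an orbit while lying between its two coordinates, hence equals K. *)

From Stdlib Require Import Reals Lra.
From Coquelicot Require Import Coquelicot.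
Open Scope R_scope.

Lemma is_lim_seq_between (a b c : nat -> R) (l : R) :
  is_lim_seq a l -> is_lim_seq b l ->
  (forall n, Rmin (a n) (b n) <= c n <= Rmax (a n) (b n)) -> is_lim_seq c l.
Proof.
  intros Ha Hb Hc. apply is_lim_seq_spec; intros eps.
  apply is_lim_seq_spec in Ha; apply is_lim_seq_spec in Hb.
  generalize (filter_and _ _ (Ha eps) (Hb eps)). apply filter_imp.
  intros n [Han Hbn]. specialize (Hc n).
  apply Rabs_def2 in Han; apply Rabs_def2 in Hbn; apply Rabs_def1;
    unfold Rmin, Rmax in Hc; destruct (Rle_dec (a n) (b n)); lra.
Qed.

Definition seq_min (a b : nat -> R) (n : nat) : R := Rmin (a n) (b n).
Definition seq_max (a b : nat -> R) (n : nat) : R := Rmax (a n) (b n).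

Section NestedSegments.

Variables a b : nat -> R.
Hypothesis step_a : forall n, seq_min a b n <= a (S n) <= seq_max a b n.
Hypothesis step_b : forall n, seq_min a b n <= b (S n) <= seq_max a b n.

Lemma seq_min_incr n : seq_min a b n <= seq_min a b (S n).
Proof. apply Rmin_glb; [apply step_a | apply step_b]. Qed.

Lemma seq_max_decr n : seq_max a b (S n) <= seq_max a b n.
Proof. apply Rmax_lub; [apply step_a | apply step_b]. Qed.

Lemma seq_min_le_max0 n : seq_min a b n <= seq_max a b 0.
Proof.
  apply Rle_trans with (seq_max a b n); [apply Rmin_Rmax |].
  induction n as [|n IHn]; [apply Rle_refl |].
  apply Rle_trans with (seq_max a b n); [apply seq_max_decr | exact IHn].
Qed.

Lemma seq_max_ge_min0 n : seq_min a b 0 <= seq_max a b n.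
Proof.
  apply Rle_trans with (seq_min a b n); [| apply Rmin_Rmax].
  induction n as [|n IHn]; [apply Rle_refl |].
  apply Rle_trans with (seq_min a b n); [exact IHn | apply seq_min_incr].
Qed.

Lemma is_lim_seq_min : is_lim_seq (seq_min a b) (real (Lim_seq (seq_min a b))).
Proof.
  destruct (ex_finite_lim_seq_incr _ _ seq_min_incr seq_min_le_max0) as [l Hl].
  rewrite (is_lim_seq_unique _ _ Hl). exact Hl.
Qed.

Lemma is_lim_seq_max : is_lim_seq (seq_max a b) (real (Lim_seq (seq_max a b))).
Proof.
  destruct (ex_finite_lim_seq_decr _ _ seq_max_decr seq_max_ge_min0) as [l Hl].
  rewrite (is_lim_seq_unique _ _ Hl). exact Hl.
Qed.

Lemma Lim_seq_min_max_bounds :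
  seq_min a b 0 <= real (Lim_seq (seq_min a b)) /\
  real (Lim_seq (seq_min a b)) <= real (Lim_seq (seq_max a b)) /\
  real (Lim_seq (seq_max a b)) <= seq_max a b 0.
Proof.
  split; [| split].
  - exact (is_lim_seq_incr_compare _ _ is_lim_seq_min seq_min_incr 0).
  - exact (is_lim_seq_le _ _ _ _ (fun n => Rmin_Rmax _ _) is_lim_seq_min is_lim_seq_max).
  - exact (is_lim_seq_decr_compare _ _ is_lim_seq_max seq_max_decr 0).
Qed.

Lemma nested_segments_squeeze (l : R) :
  real (Lim_seq (seq_min a b)) = l -> real (Lim_seq (seq_max a b)) = l ->
  is_lim_seq a l /\ is_lim_seq b l.
Proof.
  intros Hlo Hup.
  assert (Hmin := is_lim_seq_min); assert (Hmax := is_lim_seq_max).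
  rewrite Hlo in Hmin; rewrite Hup in Hmax.
  split; apply (is_lim_seq_between _ _ _ _ Hmin Hmax); intros n;
    unfold seq_min, seq_max; rewrite Rmin_left, Rmax_right by apply Rmin_Rmax;
    [split; [apply Rmin_l | apply Rmax_l] | split; [apply Rmin_r | apply Rmax_r]].
Qed.

End NestedSegments.

Definition orbit_fst (M N : R -> R -> R) (x y : R) (n : nat) : R := fst (MN_iter M N n (x, y)).
Definition orbit_snd (M N : R -> R -> R) (x y : R) (n : nat) : R := snd (MN_iter M N n (x, y)).

Lemma orbit_fst_succ M N x y n : orbit_fst M N x y (S n) = orbit_fst M N (M x y) (N x y) n.
Proof. unfold orbit_fst, MN_iter. rewrite Nat.iter_succ_r. reflexivity. Qed.

Lemma orbit_snd_succ M N x y n : orbit_snd M N x y (S n) = orbit_snd M N (M x y) (N x y) n.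
Proof. unfold orbit_snd, MN_iter. rewrite Nat.iter_succ_r. reflexivity. Qed.

Definition lower_orbit_mean (M N : R -> R -> R) (x y : R) : R :=
  real (Lim_seq (seq_min (orbit_fst M N x y) (orbit_snd M N x y))).
Definition upper_orbit_mean (M N : R -> R -> R) (x y : R) : R :=
  real (Lim_seq (seq_max (orbit_fst M N x y) (orbit_snd M N x y))).

Lemma lower_orbit_mean_invariant I M N : is_invariant I M N (lower_orbit_mean M N).
Proof.
  intros x y _ _. unfold lower_orbit_mean.
  rewrite <- (Lim_seq_incr_1 (seq_min (orbit_fst M N x y) (orbit_snd M N x y))).
  f_equal; apply Lim_seq_ext; intros n.
  unfold seq_min. rewrite orbit_fst_succ, orbit_snd_succ. reflexivity.
Qed.

Lemma upper_orbit_mean_invariant I M N : is_invariant I M N (upper_orbit_mean M N).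
Proof.
  intros x y _ _. unfold upper_orbit_mean.
  rewrite <- (Lim_seq_incr_1 (seq_max (orbit_fst M N x y) (orbit_snd M N x y))).
  f_equal; apply Lim_seq_ext; intros n.
  unfold seq_max. rewrite orbit_fst_succ, orbit_snd_succ. reflexivity.
Qed.

Section Orbits.

Variables (I : R -> Prop) (M N : R -> R -> R).
Hypotheses (HI : is_interval I) (HM : is_mean I M) (HN : is_mean I N).

Lemma mean_mem (K : R -> R -> R) x y : is_mean I K -> I x -> I y -> I (K x y).
Proof.
  intros HK Hx Hy. destruct (HK x y Hx Hy) as [Hmin Hmax].
  unfold Rmin, Rmax in *. destruct (Rle_dec x y).
  - exact (HI x _ y Hx Hy (conj Hmin Hmax)).
  - apply (HI y _ x Hy Hx); lra.
Qed.

Lemma orbit_mem x y n : I x -> I y -> I (orbit_fst M N x y n) /\ I (orbit_snd M N x y n).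
Proof.
  intros Hx Hy. induction n as [|n [IHf IHs]]; [split; assumption |].
  split; apply mean_mem; assumption.
Qed.

Lemma orbit_fst_step x y n : I x -> I y ->
  seq_min (orbit_fst M N x y) (orbit_snd M N x y) n <= orbit_fst M N x y (S n) <=
  seq_max (orbit_fst M N x y) (orbit_snd M N x y) n.
Proof. intros Hx Hy. destruct (orbit_mem x y n Hx Hy). apply HM; assumption. Qed.

Lemma orbit_snd_step x y n : I x -> I y ->
  seq_min (orbit_fst M N x y) (orbit_snd M N x y) n <= orbit_snd M N x y (S n) <=
  seq_max (orbit_fst M N x y) (orbit_snd M N x y) n.
Proof. intros Hx Hy. destruct (orbit_mem x y n Hx Hy). apply HN; assumption. Qed.

Lemma orbit_mean_bounds x y : I x -> I y ->
  Rmin x y <= lower_orbit_mean M N x y /\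
  lower_orbit_mean M N x y <= upper_orbit_mean M N x y /\
  upper_orbit_mean M N x y <= Rmax x y.
Proof.
  intros Hx Hy.
  exact (Lim_seq_min_max_bounds _ _ (fun n => orbit_fst_step x y n Hx Hy)
           (fun n => orbit_snd_step x y n Hx Hy)).
Qed.

Lemma lower_orbit_mean_mean : is_mean I (lower_orbit_mean M N).
Proof.
  intros x y Hx Hy. destruct (orbit_mean_bounds x y Hx Hy) as [H1 [H2 H3]]. lra.
Qed.

Lemma upper_orbit_mean_mean : is_mean I (upper_orbit_mean M N).
Proof.
  intros x y Hx Hy. destruct (orbit_mean_bounds x y Hx Hy) as [H1 [H2 H3]]. lra.
Qed.

Lemma invariant_orbit (K : R -> R -> R) x y n : is_invariant I M N K -> I x -> I y ->
  K (orbit_fst M N x y n) (orbit_snd M N x y n) = K x y.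
Proof.
  intros HK Hx Hy. induction n as [|n IHn]; [reflexivity |].
  destruct (orbit_mem x y n Hx Hy). rewrite <- IHn. apply HK; assumption.
Qed.

Lemma unique_invariant_mean_orbits_converge (K : R -> R -> R) :
  unique_invariant_mean I M N K -> iterates_converge_to I M N K.
Proof.
  intros [_ [_ Huniq]] x y Hx Hy.
  destruct (nested_segments_squeeze _ _ (fun n => orbit_fst_step x y n Hx Hy)
              (fun n => orbit_snd_step x y n Hx Hy) (K x y)
              (Huniq _ lower_orbit_mean_mean (lower_orbit_mean_invariant I M N) x y Hx Hy)
              (Huniq _ upper_orbit_mean_mean (upper_orbit_mean_invariant I M N) x y Hx Hy))
    as [Hfst Hsnd].
  split; apply is_lim_seq_Reals; assumption.
Qed.

Lemma orbits_converge_invariant (K : R -> R -> R) :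
  iterates_converge_to I M N K -> is_invariant I M N K.
Proof.
  intros Hcv x y Hx Hy.
  destruct (Hcv _ _ (mean_mem M x y HM Hx Hy) (mean_mem N x y HN Hx Hy)) as [Hshift _].
  destruct (Hcv x y Hx Hy) as [Horbit _].
  apply is_lim_seq_Reals, is_lim_seq_incr_1 in Horbit.
  apply is_lim_seq_Reals, is_lim_seq_unique in Hshift.
  assert (Hlim : Lim_seq (orbit_fst M N (M x y) (N x y)) = K x y).
  { apply is_lim_seq_unique, (is_lim_seq_ext _ _ _ (orbit_fst_succ M N x y) Horbit). }
  unfold orbit_fst in Hlim. rewrite Hshift in Hlim. injection Hlim; trivial.
Qed.

Lemma orbits_converge_unique (K : R -> R -> R) :
  iterates_converge_to I M N K ->
  forall K' : R -> R -> R, is_mean I K' -> is_invariant I M N K' ->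
  forall x y, I x -> I y -> K' x y = K x y.
Proof.
  intros Hcv K' HK' Hinv x y Hx Hy.
  destruct (Hcv x y Hx Hy) as [Hfst Hsnd]. apply is_lim_seq_Reals in Hfst, Hsnd.
  assert (Hconst : is_lim_seq (fun _ => K' x y) (K x y)).
  { apply (is_lim_seq_between _ _ _ _ Hfst Hsnd); intros n.
    rewrite <- (invariant_orbit K' x y n Hinv Hx Hy).
    destruct (orbit_mem x y n Hx Hy). apply HK'; assumption. }
  apply is_lim_seq_unique in Hconst. rewrite Lim_seq_const in Hconst.
  injection Hconst; trivial.
Qed.

End Orbits.

Theorem mainTheorem4 (I : R -> Prop) (K M N : R -> R -> R) :
  is_interval I -> is_mean I K -> is_mean I M -> is_mean I N ->
  (unique_invariant_mean I M N K <-> iterates_converge_to I M N K).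
Proof.
  intros HI HK HM HN. split.
  - exact (unique_invariant_mean_orbits_converge I M N HI HM HN K).
  - intros Hcv. split; [exact HK | split].
    + exact (orbits_converge_invariant I M N HI HM HN K Hcv).
    + exact (orbits_converge_unique I M N HI HM HN K Hcv).
Qed.
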